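(* Let $X$ be a real Banach space and $T:X\rightrightarrows X^*$ maximal monotone. The following are equivalent: 1. $R(T)$ is bounded; 2. for every $h\in\mathcal{F}_T$, $P_2(D(h))$ is bounded; 3. there exists $h\in\mathcal{F}_T$ with $P_2(D(h))$ bounded; 4. the functions $h(\cdot,x^* ):X\to\mathbb{R}\cup\{\pm\infty\}$, for $h\in\mathcal{F}_T$ and $x^*\in P_2D(h)$, are all real-valued and there is $0\leq L<\infty$ with $|h(x,x^* )-h(z,x^* )|\leq L\|x-z\|$ for all $x,z\in X$, $h\in\mathcal{F}_T$, $x^*\in P_2D(h)$; 5. there exists $h\in\mathcal{F}_T$ such that the functions $h(\cdot,x^* )$, $x^*\in P_2D(h)$, are all real-valued and there is $0\leq L<\infty$ with $|h(x,x^* )-h(z,x^* )|\leq L\|x-z\|$ for all $x,z\in X$, $x^*\in P_2D(h)$.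
   Context: An operator $T:X\rightrightarrows X^*$ is a subset of $X\times X^*$, with range $R(T)$ its projection onto $X^*$; $T$ is monotone if $\langle x-y,x^*-y^*\rangle\geq0$ for all $(x,x^* ),(y,y^* )\in T$, and maximal monotone if it is monotone and not properly contained in another monotone operator. $\mathcal{F}_T$ is the set of all convex lower semicontinuous $h:X\times X^*\to\mathbb{R}\cup\{\pm\infty\}$ with $h(x,x^* )\geq\langle x,x^*\rangle$ for all $(x,x^* )$ and equality on $T$. $P_1,P_2$ are the canonical projections of $X\times X^*$ onto $X$ and $X^*$; $D(h)=\{z\;|\;h(z)<\infty\}$. *)

From HB Require Import structures.
From mathcomp Require Import all_boot all_order all_algebra.
From mathcomp Require Import all_classical all_reals all_analysis.
Set Implicit Arguments. Unset Strict Implicit. Unset Printing Implicit Defensive.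
Import Order.TTheory GRing.Theory Num.Theory.
Import numFieldNormedType.Exports.
Local Open Scope classical_set_scope.
Local Open Scope ring_scope.

Definition is_dual (R : realType) (X : normedModType R) (f : X -> R) : Prop :=
  (forall x y : X, f (x + y) = f x + f y) /\
  (forall (a : R) (x : X), f (a *: x) = a * f x) /\
  continuous f.

Definition is_operator (R : realType) (X : normedModType R)
  (T : set (X * (X -> R))) : Prop :=
  forall z, T z -> is_dual z.2.

Definition monotone_op (R : realType) (X : normedModType R)
  (T : set (X * (X -> R))) : Prop :=
  is_operator T /\
  forall x f y g, T (x, f) -> T (y, g) -> 0 <= f (x - y) - g (x - y).

Definition maximal_monotone (R : realType) (X : normedModType R)
  (T : set (X * (X -> R))) : Prop :=
  monotone_op T /\
  forall T' : set (X * (X -> R)), monotone_op T' -> T `<=` T' -> T' = T.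

Definition range_bounded (R : realType) (X : normedModType R)
  (T : set (X * (X -> R))) : Prop :=
  exists M : R, forall x f, T (x, f) -> forall u : X, `|f u| <= M * `|u|.

(* Functions h : X × X^* -> R ∪ {±∞}; only values at dual f matter. *)
Definition ext_convex (R : realType) (X : normedModType R)
  (h : X * (X -> R) -> \bar R) : Prop :=
  forall x1 f1 x2 f2 (l r1 r2 : R), is_dual f1 -> is_dual f2 ->
    0 <= l -> l <= 1 ->
    (h (x1, f1) <= r1%:E)%E -> (h (x2, f2) <= r2%:E)%E ->
    (h ((l *: x1 + (1 - l) *: x2)%R, fun u => (l * f1 u + (1 - l) * f2 u)%R)
       <= (l * r1 + (1 - l) * r2)%:E)%E.

(* Lower semicontinuity w.r.t. the norm topology of X × X^*
   (the dual norm ball of radius d around f is {g | |g u - f u| <= d |u|}). *)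
Definition ext_lsc (R : realType) (X : normedModType R)
  (h : X * (X -> R) -> \bar R) : Prop :=
  forall x f, is_dual f -> forall t : R, (t%:E < h (x, f))%E ->
    exists2 d : R, 0 < d &
      forall y g, is_dual g -> `|y - x| < d ->
        (forall u : X, `|g u - f u| <= d * `|u|) -> (t%:E < h (y, g))%E.

Definition fitzpatrick_family (R : realType) (X : normedModType R)
  (T : set (X * (X -> R))) (h : X * (X -> R) -> \bar R) : Prop :=
  ext_convex h /\ ext_lsc h /\
  (forall x f, is_dual f -> ((f x)%:E <= h (x, f))%E) /\
  (forall x f, T (x, f) -> h (x, f) = (f x)%:E).

Definition P2D (R : realType) (X : normedModType R)
  (h : X * (X -> R) -> \bar R) (f : X -> R) : Prop :=
  is_dual f /\ exists x : X, (h (x, f) < +oo)%E.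

Definition P2D_bounded (R : realType) (X : normedModType R)
  (h : X * (X -> R) -> \bar R) : Prop :=
  exists M : R, forall f, P2D h f -> forall u : X, `|f u| <= M * `|u|.

From HB Require Import structures.
From mathcomp Require Import all_boot all_order all_algebra.
From mathcomp Require Import all_classical all_reals all_analysis.
Import Order.TTheory GRing.Theory Num.Theory.
Import numFieldNormedType.Exports.
Local Open Scope classical_set_scope.
Local Open Scope ring_scope.

From Stdlib Require List.
From mathcomp Require Import lra ring.

Set Implicit Arguments.
Unset Strict Implicit.

(* If R(T) is bounded by M, a Debrunner--Flor argument (Ville's theorem of the
   alternative for finitely many pairs of T, then Tychonoff compactness of the
   M-ball of functionals in the pointwise topology) and maximality give
   D(T) = X.  Every h in F_T dominates the Fitzpatrick function, and testing
   this against pairs (u, f) of T for all u bounds every x^* in P_2 D(h) by M.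
   Convexity of h along segments towards far-away points of T, together with
   lower semicontinuity, then gives h(x, x^* ) <= h(y, x^* ) + M |x - y|.
   Conversely T is contained in D(h), and a Lipschitz bound L at a pair
   (x, x^* ) of T forces |x^*| <= L. *)

Section FiniteSeparation.
Variables (R : realFieldType) (U : Type).

Lemma exists_between_seq (x : R) (B : seq U) (G : U -> R) :
  (forall b, List.In b B -> x < G b) ->
  exists2 t, x < t & forall b, List.In b B -> t < G b.
Proof.
elim: B => [|b B IH] HB; first by exists (x + 1) => //; lra.
have [t xt tB] := IH (fun b' hb' => HB b' (or_intror hb')).
have xb := HB b (or_introl erefl).
exists (Num.min t ((x + G b) / 2)); first by rewrite lt_min xt /=; lra.
move=> b' [<-|hb']; rewrite gt_min; last by rewrite tB.
by apply/orP; right; lra.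
Qed.

Lemma separate_seq (x : R) (A B : seq U) (F G : U -> R) :
  (forall b, List.In b B -> x < G b) ->
  (forall a b, List.In a A -> List.In b B -> F a < G b) ->
  exists t, [/\ x < t, forall a, List.In a A -> F a < t
                & forall b, List.In b B -> t < G b].
Proof.
move=> HxB; elim: A => [|a A IH] HAB.
  by have [t xt tB] := exists_between_seq HxB; exists t.
have [t1 xt1 t1B] := exists_between_seq (HAB a ^~ (or_introl erefl)).
have [t2 [xt2 At2 t2B]] := IH (fun a' b ha' => HAB a' b (or_intror ha')).
exists (Num.max t1 t2); split.
- by rewrite lt_max xt2 orbT.
- by move=> a' [<-|/At2 h]; rewrite lt_max ?xt1 ?h ?orbT.
- by move=> b hb; rewrite gt_max t1B ?t2B.
Qed.

End FiniteSeparation.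

Section Ville.
Variables (R : realFieldType) (V : lmodType R) (col : V -> nat -> R).
Hypothesis col_lin : forall (c : R) x y j, col (c *: x + y) j = c * col x j + col y j.

Lemma col0 j : col 0 j = 0.
Proof. by have := col_lin 1 0 0 j; rewrite scale1r addr0 mul1r => h; lra. Qed.

Lemma colZ c x j : col (c *: x) j = c * col x j.
Proof. by have := col_lin c x 0 j; rewrite addr0 col0 addr0. Qed.

Inductive nonneg_comb (rs : seq V) : V -> R -> Prop :=
| nonneg_comb0 : nonneg_comb rs 0 0
| nonneg_combS r c v w : List.In r rs -> 0 <= c -> nonneg_comb rs v w ->
    nonneg_comb rs (c *: r + v) (c + w).
Arguments nonneg_comb0 {rs}.

Lemma nonneg_comb_ge0 rs v w : nonneg_comb rs v w -> 0 <= w.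
Proof. by elim=> // r c v' w' _ c0 _ w0; apply: addr_ge0. Qed.

Lemma nonneg_comb_single rs r c : List.In r rs -> 0 <= c -> nonneg_comb rs (c *: r) c.
Proof.
move=> hr c0; have := nonneg_combS hr c0 nonneg_comb0.
by rewrite !addr0.
Qed.

Lemma nonneg_combD rs v1 w1 v2 w2 :
  nonneg_comb rs v1 w1 -> nonneg_comb rs v2 w2 -> nonneg_comb rs (v1 + v2) (w1 + w2).
Proof.
move=> h1 h2; elim: h1 => [|r c v w hr c0 _ IH]; first by rewrite !add0r.
by rewrite -!addrA; apply: nonneg_combS.
Qed.

Lemma nonneg_combZ rs a v w :
  0 <= a -> nonneg_comb rs v w -> nonneg_comb rs (a *: v) (a * w).
Proof.
move=> a0; elim=> [|r c v' w' hr c0 _ IH].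
  by rewrite scaler0 mulr0; apply: nonneg_comb0.
by rewrite scalerDr scalerA mulrDr; apply: nonneg_combS => //; apply: mulr_ge0.
Qed.

Lemma nonneg_comb_trans rs rs' v w :
  (forall s, List.In s rs' -> exists2 ws, 0 < ws & nonneg_comb rs s ws) ->
  nonneg_comb rs' v w -> 0 < w -> exists2 w', 0 < w' & nonneg_comb rs v w'.
Proof.
move=> Hs comb w0.
suff [w' cw' pos] : exists2 w', nonneg_comb rs v w' & (0 < w -> 0 < w').
  by exists w'; [apply: pos | ].
elim: comb {w0} => [|r c v' w' hr c0 _ [w'' cw'' IH]].
  by exists 0; [apply: nonneg_comb0 | rewrite ltxx].
have [ws ws0 cws] := Hs r hr.
exists (c * ws + w''); first by apply: nonneg_combD => //; apply: nonneg_combZ.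
have w''0 := nonneg_comb_ge0 cw''.
have [c_gt0 _|] := ltP 0 c; first by apply: ltr_pwDl => //; apply: mulr_gt0.
rewrite le_eqVlt ltNge c0 orbF => /eqP ->.
by rewrite mul0r !add0r.
Qed.

Lemma nonneg_comb_col_ge0 rs n v w :
  (forall r, List.In r rs -> 0 <= col r n) -> nonneg_comb rs v w -> 0 <= col v n.
Proof.
move=> H; elim=> [|r c v' w' hr c0 _ IH]; first by rewrite col0.
by rewrite col_lin; apply: addr_ge0 => //; apply: mulr_ge0 => //; apply: H.
Qed.

Definition weighted_cols n (mu : nat -> R) r := \sum_(j < n) col r j * mu j.

Lemma weighted_cols_lin n mu c x y :
  weighted_cols n mu (c *: x + y) = c * weighted_cols n mu x + weighted_cols n mu y.
Proof.
rewrite /weighted_cols mulr_sumr -big_split /=; apply: eq_bigr => j _.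
by rewrite col_lin mulrDl mulrA.
Qed.

(* Fourier--Motzkin elimination of the coordinate [n]. *)
Section FourierMotzkin.
Variables (n : nat) (rs : seq V).

Definition fm_pos := List.filter (fun r => 0 <= col r n) rs.
Definition fm_neg := List.filter (fun r => col r n < 0) rs.
Definition fm_pair r s := (- col s n) *: r + col r n *: s.
Definition fm_elim :=
  fm_pos ++ List.flat_map (fun r => List.map (fm_pair r) fm_neg) fm_pos.

Lemma in_fm_pos r : List.In r fm_pos <-> List.In r rs /\ 0 <= col r n.
Proof. exact: List.filter_In. Qed.

Lemma in_fm_neg r : List.In r fm_neg <-> List.In r rs /\ col r n < 0.
Proof. exact: List.filter_In. Qed.

Lemma in_fm_elim s : List.In s fm_elim ->
  List.In s fm_pos \/
  exists r s', [/\ List.In r fm_pos, List.In s' fm_neg & s = fm_pair r s'].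
Proof.
move=> /List.in_app_iff [|/List.in_flat_map [r [hr /List.in_map_iff [s' [<- hs']]]]].
  by left.
by right; exists r, s'.
Qed.

Lemma fm_pair_in_elim r s : List.In r fm_pos -> List.In s fm_neg ->
  List.In (fm_pair r s) fm_elim.
Proof.
move=> hr hs; apply/List.in_app_iff; right.
by apply/List.in_flat_map; exists r; split => //; apply: List.in_map.
Qed.

Lemma col_fm_pair r s : col (fm_pair r s) n = 0.
Proof. by rewrite col_lin colZ mulNr mulrC addNr. Qed.

Lemma fm_elim_comb v w :
  nonneg_comb fm_elim v w -> 0 < w -> (forall j, (j < n)%N -> 0 <= col v j) ->
  exists w', [/\ nonneg_comb rs v w', 0 < w' & forall j, (j < n.+1)%N -> 0 <= col v j].
Proof.
move=> comb w0 vj.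
have [|w' w'0 comb'] := nonneg_comb_trans (rs := rs) _ comb w0.
  move=> s /in_fm_elim [/in_fm_pos [hs _]|
    [r [s' [/in_fm_pos [hr cr] /in_fm_neg [hs' cs'] ->]]]].
    by exists 1; [apply: ltr01 | rewrite -[s]scale1r; apply: nonneg_comb_single].
  exists (- col s' n + col r n); first by apply: ltr_pwDl; rewrite ?oppr_gt0.
  apply: nonneg_combD; apply: nonneg_comb_single => //.
  by rewrite oppr_ge0 ltW.
exists w'; split => // j; rewrite ltnS leq_eqVlt => /orP [/eqP ->|/vj //].
apply: nonneg_comb_col_ge0 comb => s /in_fm_elim [/in_fm_pos [] //|[r [s' [_ _ ->]]]].
by rewrite col_fm_pair.
Qed.

Lemma fm_elim_weights mu : (forall j, 0 <= mu j) ->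
  (forall s, List.In s fm_elim -> weighted_cols n mu s < 0) ->
  exists2 mu', (forall j, 0 <= mu' j) &
    forall r, List.In r rs -> weighted_cols n.+1 mu' r < 0.
Proof.
move=> mu0 Hmu; set S := weighted_cols n mu.
have S_fm_pos r : List.In r fm_pos -> S r < 0.
  by move=> hr; apply: Hmu; apply/List.in_app_iff; left.
(* the weight [t] of the new coordinate must separate these two families *)
set F := fun s => S s / (- col s n).
set G := fun r => - S r / col r n.
have FG s r : List.In s fm_neg -> List.In r (List.filter (fun r => 0 < col r n) fm_pos) ->
    F s < G r.
  move=> hs /List.filter_In [hr cr]; have [_ cs] := (in_fm_neg s).1 hs.
  have := Hmu _ (fm_pair_in_elim hr hs).
  rewrite /fm_pair weighted_cols_lin -[col r n *: s]addr0 weighted_cols_lin.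
  rewrite -/S /F /G ltr_pdivrMr ?oppr_gt0 // mulrAC ltr_pdivlMr //.
  have -> : S 0 = 0 by rewrite /S /weighted_cols big1 // => j _; rewrite col0 mul0r.
  nra.
have [|t [t0 Ft tG]] := separate_seq (x := 0) _ FG.
  by move=> r /List.filter_In [hr cr]; rewrite /G divr_gt0 // oppr_gt0 S_fm_pos.
exists (fun j => if (j < n)%N then mu j else t).
  by move=> j; case: ifP => _ //; apply: ltW.
move=> r hr; rewrite /weighted_cols big_ord_recr /= ltnn.
under eq_bigr => i _ do rewrite ltn_ord.
rewrite -/(weighted_cols n mu r) -/S.
have [cr|cr] := leP 0 (col r n).
  have hp : List.In r fm_pos by apply/in_fm_pos.
  move: cr; rewrite le_eqVlt => /orP [/eqP <-|cr]; first by rewrite mul0r addr0 S_fm_pos.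
  have := tG r (proj2 (List.filter_In _ _ _) (conj hp cr)).
  by rewrite /G ltr_pdivlMr // => h; nra.
have := Ft r (proj2 (in_fm_neg r) (conj hr cr)).
by rewrite /F ltr_pdivrMr ?oppr_gt0 // => h; nra.
Qed.

End FourierMotzkin.

Theorem ville n rs :
  (exists v w, [/\ nonneg_comb rs v w, 0 < w & forall j, (j < n)%N -> 0 <= col v j])
  \/ exists2 mu : nat -> R, (forall j, 0 <= mu j) &
       forall r, List.In r rs -> weighted_cols n mu r < 0.
Proof.
elim: n rs => [|n IH] rs.
  case: rs => [|r rs]; first by right; exists (fun _ => 0).
  left; exists r, 1; split => //.
  by rewrite -[X in nonneg_comb _ X]scale1r; apply: nonneg_comb_single => //; left.
case: (IH (fm_elim n rs)) => [[v [w [comb w0 vj]]] | [mu mu0 Hmu]].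
  by left; have [w' [? ? ?]] := fm_elim_comb comb w0 vj; exists v, w'.
by right; apply: fm_elim_weights Hmu.
Qed.

End Ville.

Definition dual_norm_le (R : realType) (X : normedModType R) (f : X -> R) (M : R) :=
  forall u, `|f u| <= M * `|u|.

Definition range_norm_le (R : realType) (X : normedModType R)
    (T : set (X * (X -> R))) (M : R) :=
  forall x f, T (x, f) -> dual_norm_le f M.

Lemma range_bounded_norm_le (R : realType) (X : normedModType R) (T : set (X * (X -> R))) :
  range_bounded T -> exists2 M, 0 <= M & range_norm_le T M.
Proof.
move=> [M TM]; exists (Num.max M 0); first by rewrite le_max lexx orbT.
move=> x f Txf u; apply: (le_trans (TM _ _ Txf u)); apply: ler_wpM2r => //.
by rewrite le_max lexx.
Qed.

Definition monotonically_related (R : realType) (X : normedModType R)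
    (T : set (X * (X -> R))) (x : X) (f : X -> R) :=
  forall a h, T (a, h) -> 0 <= f (x - a) - h (x - a).

Section Duals.
Variables (R : realType) (X : normedModType R).
Implicit Types (f g : X -> R) (M : R).

Lemma is_dualD f : is_dual f -> forall x y, f (x + y) = f x + f y.
Proof. by case. Qed.

Lemma is_dualZ f : is_dual f -> forall a x, f (a *: x) = a * f x.
Proof. by case=> _ []. Qed.

Lemma is_dual0 f : is_dual f -> f 0 = 0.
Proof. by move=> df; have := is_dualZ df 0 0; rewrite scale0r mul0r. Qed.

Lemma is_dualN f : is_dual f -> forall x, f (- x) = - f x.
Proof. by move=> df x; rewrite -scaleN1r (is_dualZ df) mulN1r. Qed.

Lemma is_dualB f : is_dual f -> forall x y, f (x - y) = f x - f y.
Proof. by move=> df x y; rewrite (is_dualD df) (is_dualN df). Qed.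

Lemma is_dual_comb (a b : R) f g : is_dual f -> is_dual g ->
  is_dual (fun u => a * f u + b * g u).
Proof.
move=> df dg; split; [|split].
- by move=> x y; rewrite (is_dualD df) (is_dualD dg); ring.
- by move=> c x; rewrite (is_dualZ df) (is_dualZ dg); ring.
- have [_ [_ cf]] := df; have [_ [_ cg]] := dg.
  move=> z; exact: (continuousD (continuousM (@cst_continuous _ _ a z) (cf z))
                                (continuousM (@cst_continuous _ _ b z) (cg z))).
Qed.

Lemma dual_norm_le_continuous f M :
  (forall u v, f (u - v) = f u - f v) -> dual_norm_le f M -> continuous f.
Proof.
move=> fB fM x; apply/cvgrPdist_lt => e e0.
have M1 : 0 < `|M| + 1 by rewrite ltr_wpDl.
near=> y.
have hy : `|x - y| < e / (`|M| + 1).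
  near: y; exact: (@cvgr_dist_lt _ _ _ (nbhs x) _ id x cvg_id _ (divr_gt0 e0 M1)).
rewrite -fB; apply: (le_lt_trans (fM _)).
apply: (le_lt_trans (ler_wpM2r (normr_ge0 _) (ler_norm M))).
apply: (le_lt_trans (ler_wpM2l (normr_ge0 _) (ltW hy))).
rewrite mulrA ltr_pdivrMr // mulrDr mulr1 mulrC ltrDl.
Unshelve. all: by end_near. Qed.

Lemma is_dual_norm_le f : is_dual f -> exists2 M, 0 < M & dual_norm_le f M.
Proof.
move=> df; have [_ [_ cf]] := df.
have := cf 0; move/cvgrPdist_lt => /(_ 1 ltr01).
rewrite (is_dual0 df) => /nbhs_ballP [e e0 He].
exists (2 / e); first by rewrite divr_gt0.
move=> u; have [->|u0] := eqVneq u 0; first by rewrite (is_dual0 df) !normr0 mulr0.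
have nu : 0 < `|u| by rewrite normr_gt0.
set k := e / (2 * `|u|).
have k0 : 0 < k by rewrite divr_gt0 // mulr_gt0.
have hv : ball (0 : X) e (k *: u).
  rewrite -ball_normE /ball_ /= sub0r normrN normrZ gtr0_norm //.
  have -> : k * `|u| = e / 2 by rewrite /k; field; rewrite gt_eqF.
  by rewrite ltr_pdivrMr // ltr_pMr // ltr1n.
have := He _ hv; rewrite /= sub0r normrN (is_dualZ df) normrM gtr0_norm // => h.
have : e * `|f u| < 2 * `|u|.
  by move: h; rewrite /k mulrAC ltr_pdivrMr ?mulr_gt0 // mul1r.
by rewrite mulrAC ler_pdivlMr // mulrC => /ltW.
Qed.

Lemma dual_norm_le_affine f (C M : R) :
  is_dual f -> (forall u, f u <= C + M * `|u|) -> dual_norm_le f M.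
Proof.
move=> df H.
have H1 u : f u <= M * `|u|.
  rewrite leNgt; apply/negP => hlt.
  set del := f u - M * `|u|.
  have d0 : 0 < del by rewrite /del subr_gt0.
  have hC := normr_ge0 C.
  set t := (`|C| + 1) / del.
  have t0 : 0 < t by rewrite divr_gt0 //; lra.
  have := H (t *: u); rewrite (is_dualZ df) normrZ gtr0_norm // => h1.
  have : t * del = `|C| + 1 by rewrite /t mulfVK // gt_eqF.
  rewrite /del => h2.
  have := ler_norm C; nra.
move=> u; rewrite ler_norml H1 andbT.
by have := H1 (- u); rewrite (is_dualN df) normrN; lra.
Qed.

End Duals.

Section MonotoneWeights.
Variables (R : realFieldType) (n : nat) (c : nat -> nat -> R) (mu : nat -> R).
Hypothesis c_mono : forall i j, (i < n)%N -> (j < n)%N -> 0 <= c i j + c j i.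
Hypothesis mu_ge0 : forall j, 0 <= mu j.

Lemma monotone_quadratic_ge0 :
  0 <= \sum_(i < n) \sum_(j < n) mu i * mu j * c i j.
Proof.
set Q := \sum_(i < n) _.
have QE : Q = \sum_(i < n) \sum_(j < n) mu i * mu j * c j i.
  rewrite /Q exchange_big /=; apply: eq_bigr => i _; apply: eq_bigr => j _.
  by rewrite [mu j * _]mulrC.
suff : 0 <= Q + Q by lra.
rewrite {2}QE -big_split /=; apply: sumr_ge0 => i _.
rewrite -big_split /=; apply: sumr_ge0 => j _.
by rewrite -mulrDr; apply: mulr_ge0; [apply: mulr_ge0 | apply: c_mono].
Qed.

Lemma monotone_weights_not_neg : (0 < n)%N ->
  ~ (forall i, (i < n)%N -> \sum_(j < n) c i j * mu j < 0).
Proof.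
move=> n0 neg; set s := fun i => \sum_(j < n) c i j * mu j.
have terms_le0 (i : 'I_n) : true -> 0 <= - (mu i * s i).
  by move=> _; rewrite oppr_ge0 mulr_ge0_le0 // ltW // neg.
have sum0 : \sum_(i < n) - (mu i * s i) = 0.
  apply/eqP; rewrite eq_le sumr_ge0 // andbT sumrN oppr_le0.
  have -> : \sum_(i < n) mu i * s i = \sum_(i < n) \sum_(j < n) mu i * mu j * c i j.
    by apply: eq_bigr => i _; rewrite mulr_sumr; apply: eq_bigr => j _; ring.
  exact: monotone_quadratic_ge0.
have mu0 i : (i < n)%N -> mu i = 0.
  move=> hi; have /eqP := @psumr_eq0P _ _ _ _ terms_le0 sum0 (Ordinal hi) isT.
  rewrite oppr_eq0 mulf_eq0 => /orP [/eqP //|/eqP si].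
  by have := neg i hi; rewrite -/(s i) si ltxx.
have := neg 0%N n0; rewrite big1 ?ltxx // => j _.
by rewrite mu0 // mulr0.
Qed.

End MonotoneWeights.

Section DebrunnerFlorFinite.
Variables (R : realType) (X : normedModType R) (T : set (X * (X -> R))).
Hypothesis monoT : monotone_op T.
Variables (M : R) (x0 : X) (ps : seq (X * (X -> R))) (p0 : X * (X -> R)).
Hypothesis TM : range_norm_le T M.
Hypothesis ps_T : forall p, List.In p ps -> T p.
Hypothesis ps_neq0 : (0 < size ps)%N.

Let n := size ps.
Let q j := List.nth j ps p0.

Let Tq j : (j < n)%N -> T ((q j).1, (q j).2).
Proof. by move=> /ssrnat.ltP jn; rewrite -surjective_pairing; apply/ps_T/List.nth_In. Qed.

Let dual_q j : (j < n)%N -> is_dual (q j).2.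
Proof. by move=> /Tq; apply: monoT.1. Qed.

Let row (p : X * (X -> R)) : (nat -> R) * (X -> R) :=
  (fun j => p.2 (x0 - (q j).1) - (q j).2 (x0 - (q j).1), p.2).

Let rows := List.map row ps.

Let row_comb_spec v w : nonneg_comb rows v w ->
  [/\ forall j, v.1 j = v.2 (x0 - (q j).1) - w * (q j).2 (x0 - (q j).1),
      forall u u', v.2 (u + u') = v.2 u + v.2 u',
      forall a u, v.2 (a *: u) = a * v.2 u
    & dual_norm_le v.2 (w * M)].
Proof.
elim=> [|r c v' w' /List.in_map_iff [p [<- hp]] c0 _ [v1E v2D v2Z v2M]].
  split => //= [j|u u'|a u|u]; first by rewrite mul0r subr0.
  - by rewrite addr0.
  - by rewrite mulr0.
  - by rewrite normr0 !mul0r.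
have Tp : T (p.1, p.2) by case: p hp => a f /ps_T.
have dp : is_dual p.2 := monoT.1 _ Tp.
split => /= [j|u u'|a u|u]; rewrite !fctE.
- by rewrite v1E /GRing.scale /=; lra.
- by rewrite v2D (is_dualD dp) /GRing.scale /=; lra.
- by rewrite v2Z (is_dualZ dp) /GRing.scale /=; lra.
- apply: (le_trans (ler_normD _ _)); rewrite [_ *: _]/GRing.scale /=.
  rewrite normrM ger0_norm // !mulrDl -mulrA; apply: lerD; last exact: v2M.
  by apply: ler_wpM2l => //; exact: TM _ _ Tp u.
Qed.

Lemma debrunner_flor_nonempty : exists phi : X -> R,
  [/\ forall u v, phi (u + v) = phi u + phi v, forall a u, phi (a *: u) = a * phi u,
      dual_norm_le phi M & forall p, List.In p ps -> 0 <= phi (x0 - p.1) - p.2 (x0 - p.1)].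
Proof.
have [[v [w [comb w0 vj]]]|[mu mu0 Hmu]] :=
  ville (col := fun v j => v.1 j) (fun _ _ _ _ => erefl) n rows.
  have [v1E v2D v2Z v2M] := row_comb_spec comb.
  exists (fun u => w^-1 * v.2 u); split.
  - by move=> u u'; rewrite v2D mulrDr.
  - by move=> a u; rewrite v2Z mulrCA.
  - move=> u; rewrite normrM ger0_norm; last by rewrite invr_ge0 ltW.
    by rewrite mulrC ler_pdivrMr // [_ * w]mulrC mulrA; apply: v2M.
  - move=> p hp; have [j [/ssrnat.ltP jn <-]] := List.In_nth _ _ p0 hp.
    have := vj j jn; rewrite v1E -/(q j); set a := v.2 _; set b := (q j).2 _ => h.
    have -> : w^-1 * a - b = w^-1 * (a - w * b).
      by rewrite mulrBr mulrA mulVf ?gt_eqF // mul1r.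
    by apply: mulr_ge0 => //; rewrite invr_ge0 ltW.
set c := fun i j => (q i).2 (x0 - (q j).1) - (q j).2 (x0 - (q j).1).
have c_mono i j : (i < n)%N -> (j < n)%N -> 0 <= c i j + c j i.
  move=> hi hj; have := monoT.2 _ _ _ _ (Tq hi) (Tq hj).
  rewrite /c !(is_dualB (dual_q hi)) !(is_dualB (dual_q hj)); lra.
exfalso; apply: (monotone_weights_not_neg c_mono mu0 ps_neq0) => i hi.
by apply: (Hmu (row (q i))); apply: List.in_map; apply: List.nth_In; apply/ssrnat.ltP.
Qed.

End DebrunnerFlorFinite.

Lemma debrunner_flor_finite (R : realType) (X : normedModType R)
    (T : set (X * (X -> R))) (M : R) (x0 : X) (ps : seq (X * (X -> R))) :
  monotone_op T -> 0 <= M -> range_norm_le T M -> (forall p, List.In p ps -> T p) ->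
  exists phi : X -> R,
  [/\ forall u v, phi (u + v) = phi u + phi v, forall a u, phi (a *: u) = a * phi u,
      dual_norm_le phi M & forall p, List.In p ps -> 0 <= phi (x0 - p.1) - p.2 (x0 - p.1)].
Proof.
move=> monoT M0 TM; case: ps => [|p0 ps'] ps_T.
  exists (fun _ => 0); split => // [u v|a u|u]; rewrite ?addr0 ?mulr0 //.
  by rewrite normr0 mulr_ge0.
exact: (debrunner_flor_nonempty monoT x0 p0 TM ps_T isT).
Qed.

(* [compact_In0] is stated for pointed spaces. *)
HB.instance Definition _ (R : realType) (X : Type) :=
  isPointed.Build {ptws X -> R} (fun _ => 0).

Section DebrunnerFlor.
Variables (R : realType) (X : normedModType R) (T : set (X * (X -> R))).
Hypothesis monoT : monotone_op T.
Variables (M : R) (x0 : X).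
Hypothesis M0 : 0 <= M.
Hypothesis TM : range_norm_le T M.

Local Notation PT := {ptws X -> R}.

Let box := [set phi : PT | forall u, `[- (M * `|u|), M * `|u|]%classic (phi u)].

Let box_compact : compact box.
Proof. exact: tychonoff (fun u => @segment_compact R _ _). Qed.

Let in_box phi : box phi <-> dual_norm_le phi M.
Proof. by split=> H u; have := H u; rewrite /= in_itv /= ler_norml. Qed.

(* Constraints on [phi]: monotone relation to a pair of [T], additivity at a
   pair of points, homogeneity at a scalar and a point. *)
Local Notation index := ((X * (X -> R)) + ((X * X) + (R * X)))%type.

Let constraint_dom : set index := fun i => if i is inl p then T p else True.

Let constraint (i : index) : set PT :=
  match i with
  | inl p => [set phi | 0 <= phi (x0 - p.1) - p.2 (x0 - p.1)]
  | inr (inl uv) => [set phi | phi (uv.1 + uv.2) - phi uv.1 - phi uv.2 = 0]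
  | inr (inr au) => [set phi | phi (au.1 *: au.2) - au.1 * phi au.2 = 0]
  end.

Let eval_continuous (u : X) : continuous (fun phi : PT => phi u).
Proof. exact: proj_continuous. Qed.

Let continuous_sub (F G : PT -> R) :
  continuous F -> continuous G -> continuous (fun phi => F phi - G phi).
Proof. by move=> cF cG z; exact: (continuousB (cF z) (cG z)). Qed.

Let constraint_closed i : closed (constraint i).
Proof.
have closed_preimage (F : PT -> R) (C : set R) : continuous F -> closed C ->
    closed [set phi | C (F phi)].
  by move=> cF; apply: preimage_closed => z _; apply: cF.
case: i => [p|[[u v]|[a u]]] /=.
- apply: (closed_preimage (fun phi => phi (x0 - p.1) - p.2 (x0 - p.1)))
    (@closed_ge R 0).
  by apply: continuous_sub => //; apply: cst_continuous.
- apply: (closed_preimage (fun phi => phi (u + v) - phi u - phi v)) (@closed_eq R 0).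
  by do !apply: continuous_sub.
- apply: (closed_preimage (fun phi => phi (a *: u) - a * phi u)) (@closed_eq R 0).
  apply: continuous_sub => // z.
  by apply: continuousM; [apply: cst_continuous | apply: eval_continuous].
Qed.

Let pair_of (i : index) := if i is inl p then Some p else None.

Let In_pmap_pair_of (s : seq index) p : List.In p (pmap pair_of s) <-> inl p \in s.
Proof.
elim: s => [|i s IH] //=; rewrite in_cons; case: i => [q|q] /=; last by rewrite IH.
by split=> [[->|/IH ->]|/orP [/eqP [->]|/IH]]; rewrite ?eqxx ?orbT; [| |left|right].
Qed.

Lemma debrunner_flor : exists phi : X -> R,
  [/\ is_dual phi, dual_norm_le phi M & monotonically_related T x0 phi].
Proof.
have := box_compact; rewrite compact_In0.
move=> /(_ _ constraint_dom (fun i => box `&` constraint i)) [].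
- by exists constraint.
- move=> D sD; set ps := pmap pair_of (finmap.enum_fset D).
  have ps_T p : List.In p ps -> T p.
    by move/In_pmap_pair_of => /sD; rewrite /constraint_dom inE.
  have [phi [phiD phiZ phiM phi_rel]] := debrunner_flor_finite x0 monoT M0 TM ps_T.
  exists phi => i /= Di; split; first exact/in_box.
  case: i Di => [p|[[u v]|[a u]]] Di /=.
  + by apply: phi_rel; apply/In_pmap_pair_of.
  + by rewrite phiD; ring.
  + by rewrite phiZ; ring.
- move=> phi Hphi.
  have phiM : dual_norm_le phi M by apply/in_box; have [] := Hphi (inr (inl (0, 0))) I.
  have phiD u v : phi (u + v) = phi u + phi v.
    have [_ /= /eqP] := Hphi (inr (inl (u, v))) I.
    by rewrite subr_eq0 subr_eq => /eqP ->; ring.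
  have phiZ a u : phi (a *: u) = a * phi u.
    by have [_ /= /eqP] := Hphi (inr (inr (a, u))) I; rewrite subr_eq0 => /eqP.
  have phiB u v : phi (u - v) = phi u - phi v by rewrite phiD -scaleN1r phiZ; ring.
  exists phi; split => //; first by do !split => //; apply: dual_norm_le_continuous phiM.
  by move=> a h Tah; have [] := Hphi (inl (a, h)) Tah.
Qed.

End DebrunnerFlor.

Section Fitzpatrick.
Variables (R : realType) (X : normedModType R) (T : set (X * (X -> R))).
Hypothesis opT : is_operator T.

Definition fitzpatrick_term (q p : X * (X -> R)) : R := q.2 p.1 + p.2 q.1 - q.2 q.1.

Definition fitzpatrick (p : X * (X -> R)) : \bar R :=
  ereal_sup [set (fitzpatrick_term q p)%:E | q in T].

Lemma fitzpatrick_term_le q p : T q -> ((fitzpatrick_term q p)%:E <= fitzpatrick p)%E.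
Proof. by move=> Tq; apply: ereal_sup_ubound; exists q. Qed.

Lemma fitzpatrick_convex : ext_convex fitzpatrick.
Proof.
move=> x1 f1 x2 f2 l r1 r2 d1 d2 l0 l1 h1 h2.
apply: ge_ereal_sup => _ [q Tq <-]; rewrite lee_fin.
have := le_trans (fitzpatrick_term_le (x1, f1) Tq) h1.
have := le_trans (fitzpatrick_term_le (x2, f2) Tq) h2.
rewrite !lee_fin /fitzpatrick_term /= (is_dualD (opT Tq)) !(is_dualZ (opT Tq)).
by move=> e2 e1; nra.
Qed.

(* Each term is continuous in [p] for the product of the norm and dual-norm
   topologies, so their supremum is lower semicontinuous. *)
Lemma fitzpatrick_lsc : ext_lsc fitzpatrick.
Proof.
move=> x f df t /ereal_sup_gt [_ [q Tq <-]]; rewrite lte_fin => tq.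
have [B B0 qB] := is_dual_norm_le (opT Tq).
set eps := fitzpatrick_term q (x, f) - t.
have eps0 : 0 < eps by rewrite subr_gt0.
have K0 : 0 < 2 * (B + `|q.1| + 1) by have := normr_ge0 q.1; lra.
exists (eps / (2 * (B + `|q.1| + 1))); first by rewrite divr_gt0.
set d := eps / _ => y g dg hy hg.
apply: lt_le_trans (fitzpatrick_term_le (y, g) Tq); rewrite lte_fin.
have d0 : 0 < d by rewrite divr_gt0.
have h1 : `|q.2 y - q.2 x| <= B * d.
  rewrite -(is_dualB (opT Tq)); apply: (le_trans (qB _)).
  by apply: ler_wpM2l; [lra | exact: ltW].
have h2 := hg q.1.
have h3 : B * d + d * `|q.1| < eps.
  have -> : B * d + d * `|q.1| = d * (B + `|q.1|) by ring.
  by rewrite /d mulrAC ltr_pdivrMr //; have := normr_ge0 q.1; nra.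
move: h1 h2; rewrite !ler_norml => /andP [h1a h1b] /andP [h2a h2b].
by rewrite /eps /fitzpatrick_term /= in h3 *; lra.
Qed.

(* Comparing [h] at the convex combination [l (z, g) + (1 - l) (a, f)] with the
   pairing there and letting [l] tend to 0 shows that every member of the
   family dominates the Fitzpatrick function. *)
Lemma family_ge_fitzpatrick_term h z g c a f :
  fitzpatrick_family T h -> is_dual g -> (h (z, g) <= c%:E)%E -> T (a, f) ->
  fitzpatrick_term (a, f) (z, g) <= c.
Proof.
move=> [hconv [_ [hlow hT]]] dg hz Taf; have df : is_dual f := opT Taf.
rewrite /fitzpatrick_term /= leNgt; apply/negP => hlt.
set E := f z + g a - f a - c.
have E0 : 0 < E by rewrite /E subr_gt0.
set K := f z + g a - f a - g z.
have hK := normr_ge0 K.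
set l := E / (2 * (`|K| + E + 1)).
have K0 : 0 < 2 * (`|K| + E + 1) by lra.
have l0 : 0 < l by rewrite divr_gt0.
have l1 : l <= 1 by rewrite ler_pdivrMr //; lra.
have hA : (h (a, f) <= (f a)%:E)%E by rewrite hT.
have := hconv _ _ _ _ l _ _ dg df (ltW l0) l1 hz hA.
move/(le_trans (hlow _ _ (is_dual_comb l (1 - l) dg df))); rewrite lee_fin.
rewrite (is_dualD dg) (is_dualD df) !(is_dualZ dg) !(is_dualZ df) => In.
have hEK : E - l * K <= 0.
  rewrite -(pmulr_rle0 _ l0).
  have -> : l * (E - l * K) = (l * (l * g z + (1 - l) * g a) +
      (1 - l) * (l * f z + (1 - l) * f a)) - (l * c + (1 - l) * f a).
    by rewrite /E /K; ring.
  lra.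
have : l * `|K| < E by rewrite /l mulrAC ltr_pdivrMr //; nra.
have : l * K <= l * `|K| by apply: ler_wpM2l; [exact: ltW | exact: ler_norm].
lra.
Qed.

End Fitzpatrick.

Section MaximalMonotone.
Variables (R : realType) (X : normedModType R) (T : set (X * (X -> R))).
Hypothesis HT : maximal_monotone T.

Let opT : is_operator T := HT.1.1.
Let monoT : monotone_op T := HT.1.

Lemma maximal_monotone_related x f :
  is_dual f -> monotonically_related T x f -> T (x, f).
Proof.
move=> df Hf; have [[_ monT] maxT] := HT.
set T' := T `|` [set (x, f)].
have mT' : monotone_op T'.
  split=> [z [/opT //|-> //]|x1 f1 y1 g1 [h1|[-> ->]] [h2|[-> ->]]].
  - exact: monT h1 h2.
  - have d1 : is_dual f1 := opT h1.
    by have := Hf _ _ h1; rewrite !(is_dualB df) !(is_dualB d1); lra.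
  - exact: Hf _ _ h2.
  - by rewrite subrr.
by rewrite -(maxT T' mT' (fun z hz => or_introl hz)); right.
Qed.

Lemma fitzpatrick_ge_pairing x f : is_dual f -> ((f x)%:E <= fitzpatrick T (x, f))%E.
Proof.
move=> df; rewrite leNgt; apply/negP => hlt.
have Txf : T (x, f).
  apply: maximal_monotone_related => // a h Tah.
  have := le_lt_trans (fitzpatrick_term_le (x, f) Tah) hlt.
  have dh : is_dual h := opT Tah.
  by rewrite lte_fin /fitzpatrick_term /= (is_dualB df) (is_dualB dh); lra.
have := le_lt_trans (fitzpatrick_term_le (x, f) Txf) hlt.
by rewrite lte_fin /fitzpatrick_term /=; lra.
Qed.

Lemma fitzpatrick_eq_pairing x f : T (x, f) -> fitzpatrick T (x, f) = (f x)%:E.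
Proof.
move=> Txf; apply/eqP; rewrite eq_le; apply/andP; split.
  apply: ge_ereal_sup => _ [[a h] Tah <-]; rewrite lee_fin /fitzpatrick_term /=.
  have df : is_dual f := opT Txf; have dh : is_dual h := opT Tah.
  by have := monoT.2 _ _ _ _ Txf Tah; rewrite (is_dualB df) (is_dualB dh); lra.
by have := fitzpatrick_term_le (x, f) Txf; rewrite /fitzpatrick_term /= addrK.
Qed.

Lemma fitzpatrick_in_family : fitzpatrick_family T (fitzpatrick T).
Proof.
split; first exact: fitzpatrick_convex.
split; first exact: fitzpatrick_lsc.
by split; [apply: fitzpatrick_ge_pairing | apply: fitzpatrick_eq_pairing].
Qed.

Lemma family_gt_ninfty h x f :
  fitzpatrick_family T h -> is_dual f -> (-oo < h (x, f))%E.
Proof.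
by move=> [_ [_ [hlow _]]] df; apply: lt_le_trans (hlow _ _ df); rewrite ltNyr.
Qed.

Section BoundedRange.
Variable M : R.
Hypotheses (M0 : 0 <= M) (TM : range_norm_le T M).

Lemma dom_full x : exists f, T (x, f).
Proof.
have [phi [dphi _ rel]] := debrunner_flor monoT x M0 TM.
by exists phi; apply: maximal_monotone_related.
Qed.

Lemma P2D_norm_le h g : fitzpatrick_family T h -> P2D h g -> dual_norm_le g M.
Proof.
move=> Fh [dg [z hz]].
have fz : h (z, g) \is a fin_num.
  by rewrite fin_numElt hz andbT; apply: family_gt_ninfty.
set c := fine (h (z, g)).
have hzc : (h (z, g) <= c%:E)%E by rewrite fineK.
apply: (@dual_norm_le_affine _ _ _ (c + M * `|z|)) => // u.
have [f Tuf] := dom_full u.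
have := family_ge_fitzpatrick_term opT Fh dg hzc Tuf.
have := TM Tuf z; have := TM Tuf u; rewrite /fitzpatrick_term /=.
by rewrite !ler_norml => /andP [_ a1] /andP [a2 _]; lra.
Qed.

(* Convexity along the segment from [(y, g)] to a point [(a, f)] of [T] placed
   so that the combination with weight [lam] on it lies over [x]. *)
Lemma family_le_shift h g y cy x lam f :
  fitzpatrick_family T h -> is_dual g -> (h (y, g) <= cy%:E)%E ->
  0 < lam -> lam <= 1 -> T (y + lam^-1 *: (x - y), f) ->
  (h (x, fun u => ((1 - lam) * g u + lam * f u)%R)
     <= (cy + lam * (`|cy| + M * `|y|) + M * `|x - y|)%:E)%E.
Proof.
move=> [hconv [_ [_ hT]]] dg hy lam0 lam1 Taf.
set a := y + lam^-1 *: (x - y); have df : is_dual f := opT Taf.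
have lam_a : lam *: a = lam *: y + (x - y).
  by rewrite /a scalerDr scalerA mulfV ?gt_eqF // scale1r.
have hA : (h (a, f) <= (f a)%:E)%E by rewrite hT.
have := hconv _ _ _ _ (1 - lam) _ _ dg df (ltac:(lra)) (ltac:(lra)) hy hA.
have -> : 1 - (1 - lam) = lam by ring.
have -> : (1 - lam) *: y + lam *: a = x.
  by rewrite lam_a scalerBl scale1r addrA subrK addrC subrK.
move=> /le_trans; apply; rewrite lee_fin.
have lam_fa : lam * f a = lam * f y + f (x - y).
  by rewrite -(is_dualZ df) lam_a (is_dualD df) (is_dualZ df).
have := TM Taf y; have := TM Taf (x - y); rewrite !ler_norml.
move=> /andP [_ fxy] /andP [_ fy].
have : - cy <= `|cy| by rewrite -normrN ler_norm.
by nra.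
Qed.

Lemma family_lipschitz_ub h g y cy x :
  fitzpatrick_family T h -> is_dual g -> dual_norm_le g M ->
  (h (y, g) <= cy%:E)%E -> (h (x, g) <= (cy + M * `|x - y|)%:E)%E.
Proof.
move=> Fh dg gM hy; apply/lee_addgt0Pr => eps eps0; rewrite -EFinD.
have M_ge0 := M0.
rewrite leNgt; apply/negP => hlt.
have [_ [hlsc _]] := Fh.
have [d d0 near_gt] := hlsc x g dg _ hlt.
set Q : R := `|cy| + M * `|y|.
have Q0 : 0 <= Q by rewrite addr_ge0 ?mulr_ge0.
(* a weight small enough for the shifted functional to be [d]-close to [g]
   and for the error term [lam * Q] to stay below [eps / 2] *)
set lam := Num.min 1 (Num.min (d / (2 * M + 1)) (eps / (2 * (Q + 1)))).
have lam0 : 0 < lam.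
  by rewrite !lt_min ltr01 /=; apply/andP; split; apply: divr_gt0 => //; lra.
have lam1 : lam <= 1 by rewrite ge_min lexx.
have lam_d : lam * (2 * M + 1) <= d.
  by rewrite -ler_pdivlMr ?ge_min ?lexx ?orbT //; lra.
have lam_eps : lam * (Q + 1) <= eps / 2.
  rewrite -ler_pdivlMr; last by lra.
  by rewrite -mulrA -invfM !ge_min lexx !orbT.
have [f Taf] := dom_full (y + lam^-1 *: (x - y)).
have close : forall u, `|(1 - lam) * g u + lam * f u - g u| <= d * `|u|.
  move=> u; have -> : (1 - lam) * g u + lam * f u - g u = lam * (f u - g u) by ring.
  rewrite normrM gtr0_norm //.
  have : `|f u - g u| <= 2 * M * `|u|.
    by apply: (le_trans (ler_normB _ _)); have := TM Taf u; have := gM u; lra.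
  have := normr_ge0 u; have := normr_ge0 (f u - g u); nra.
have := near_gt x _ (is_dual_comb _ _ dg (opT Taf)) (ltac:(by rewrite subrr normr0)) close.
move=> /lt_le_trans /(_ (family_le_shift Fh dg hy lam0 lam1 Taf)).
by rewrite lte_fin -/Q; nra.
Qed.

Lemma family_fin_num h f x :
  fitzpatrick_family T h -> P2D h f -> h (x, f) \is a fin_num.
Proof.
move=> Fh Pf; have [df [z hz]] := Pf.
have fz : h (z, f) \is a fin_num.
  by rewrite fin_numElt hz andbT; apply: family_gt_ninfty.
have hzc : (h (z, f) <= (fine (h (z, f)))%:E)%E by rewrite fineK.
have := family_lipschitz_ub x Fh df (P2D_norm_le Fh Pf) hzc.
move=> /le_lt_trans /(_ (ltry _)) hx.
by rewrite fin_numElt hx andbT; apply: family_gt_ninfty.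
Qed.

Lemma family_lipschitz h f x z :
  fitzpatrick_family T h -> P2D h f ->
  (`|h (x, f) - h (z, f)| <= (M * `|x - z|)%:E)%E.
Proof.
move=> Fh Pf; have [df _] := Pf; have gM := P2D_norm_le Fh Pf.
have ex := fineK (family_fin_num x Fh Pf); have ez := fineK (family_fin_num z Fh Pf).
have hz : (h (z, f) <= (fine (h (z, f)))%:E)%E by rewrite ez.
have hx : (h (x, f) <= (fine (h (x, f)))%:E)%E by rewrite ex.
have := family_lipschitz_ub x Fh df gM hz; have := family_lipschitz_ub z Fh df gM hx.
by rewrite -ex -ez -EFinB abse_EFin !lee_fin ler_norml distrC; lra.
Qed.

End BoundedRange.

Lemma P2D_bounded_range_bounded h :
  fitzpatrick_family T h -> P2D_bounded h -> range_bounded T.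
Proof.
move=> [_ [_ [_ hT]]] [M HM]; exists M => x f Txf; apply: HM; split; first exact: opT Txf.
by exists x; rewrite hT // ltry.
Qed.

(* At a pair [(x, f)] of [T] the lower bound [f (x + u) <= h (x + u, f)] and
   the Lipschitz bound between [x + u] and [x] give [f u <= L |u|]. *)
Lemma family_lipschitz_range_bounded h (L : R) :
  fitzpatrick_family T h ->
  (forall f, P2D h f -> forall x, h (x, f) \is a fin_num) ->
  (forall f, P2D h f -> forall x z, (`|h (x, f) - h (z, f)| <= (L * `|x - z|)%:E)%E) ->
  range_bounded T.
Proof.
move=> [_ [_ [hlow hT]]] hfin hlip; exists L => x f Txf.
have df : is_dual f := opT Txf.
have Pf : P2D h f by split => //; exists x; rewrite hT // ltry.
apply: (@dual_norm_le_affine _ _ _ 0) => // u.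
have fin := fineK (hfin f Pf (x + u)).
have := hlip f Pf (x + u) x; rewrite (hT x f Txf) -fin -EFinB abse_EFin lee_fin.
have := hlow (x + u) f df; rewrite -fin lee_fin.
rewrite (is_dualD df) addrAC subrr add0r => h1 h2.
have := ler_norm (fine (h (x + u, f)) - f x); lra.
Qed.

End MaximalMonotone.

Unset Implicit Arguments.

Theorem lemma4p4 (R : realType) (X : completeNormedModType R)
  (T : set (X * (X -> R))) (HT : maximal_monotone T) :
  [<-> range_bounded T;
       forall h, fitzpatrick_family T h -> P2D_bounded h;
       exists2 h, fitzpatrick_family T h & P2D_bounded h;
       (forall h, fitzpatrick_family T h ->
          forall f, P2D h f -> forall x : X, h (x, f) \is a fin_num) /\
       (exists2 L : R, 0 <= L &
          forall h, fitzpatrick_family T h -> forall f, P2D h f ->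
          forall x z : X, (`|h (x, f) - h (z, f)| <= (L * `|x - z|)%:E)%E);
       exists2 h, fitzpatrick_family T h &
         (forall f, P2D h f -> forall x : X, h (x, f) \is a fin_num) /\
         (exists2 L : R, 0 <= L &
            forall f, P2D h f ->
            forall x z : X, (`|h (x, f) - h (z, f)| <= (L * `|x - z|)%:E)%E)].
Proof.
have Ffitz := fitzpatrick_in_family HT.
tfae.
- move=> /range_bounded_norm_le [M M0 TM] h Fh.
  by exists M => f; apply: (P2D_norm_le HT M0 TM Fh).
- by move=> P2D_bdd; exists (fitzpatrick T); last exact: P2D_bdd.
- move=> [h Fh /(P2D_bounded_range_bounded HT Fh)] /range_bounded_norm_le [M M0 TM].
  split=> [h' Fh' f Pf x|]; first exact: (family_fin_num HT M0 TM x Fh' Pf).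
  by exists M => // h' Fh' f Pf x z; apply: (family_lipschitz HT M0 TM x z Fh' Pf).
- move=> [fin [L L0 lip]]; exists (fitzpatrick T) => //.
  by split; [apply: fin | exists L => //; apply: lip].
- by move=> [h Fh [fin [L _ lip]]]; apply: (family_lipschitz_range_bounded HT Fh fin lip).
Qed.
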